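(* Let $p\neq q$ be primes, $G_1$ a finite abelian group of order $p^e$ and $G_2$ a finite abelian group of order $q^f$. Let $R_i=\mathbf{Z}[G_i]$, $S_i$ the integral closure of $R_i$ in $\mathbf{Q}[G_i]$, and $I_i=\{s\in S_i: sS_i\subseteq R_i\}$ the conductor of $S_i$ into $R_i$. Regarding all tensor products over $\mathbf{Z}$ as subgroups of $S_1\otimes S_2$, one has $$I_1\otimes I_2=(R_1\otimes I_2)\cap(I_1\otimes R_2).$$ *)

From HB Require Import structures.
From mathcomp Require Import all_boot all_order all_algebra all_fingroup.
Set Implicit Arguments. Unset Strict Implicit. Unset Printing Implicit Defensive.
Import Order.TTheory GRing.Theory Num.Theory.
Local Open Scope ring_scope.

(* The rational group algebra Q[G] of a finite group G (the whole carrier of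
   a finGroupType gT), represented as coefficient functions G -> Q. *)
Definition QG (gT : finGroupType) := {ffun gT -> rat}.

Definition gmul (gT : finGroupType) (a b : {ffun gT -> rat}) : {ffun gT -> rat} :=
  [ffun g => \sum_(h : gT) a h * b (h^-1 * g)%g].

Definition gunit (gT : finGroupType) : {ffun gT -> rat} :=
  [ffun g => (g == 1%g)%:R].

Definition gpow (gT : finGroupType) (a : {ffun gT -> rat}) (n : nat) :=
  iter n (gmul a) (gunit gT).

Definition inZG (gT : finGroupType) (a : {ffun gT -> rat}) : Prop :=
  forall g, a g \is a Num.int.

Definition inS (gT : finGroupType) (x : {ffun gT -> rat}) : Prop :=
  exists (n : nat) (r : nat -> {ffun gT -> rat}),
    (forall i, inZG (r i)) /\
    gpow x n + \sum_(i < n) gmul (r i) (gpow x i) = 0.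

Definition inI (gT : finGroupType) (s : {ffun gT -> rat}) : Prop :=
  inS s /\ forall t, inS t -> inZG (gmul s t).

(* Elementary tensor a ⊗ b, viewed inside Q[G1] ⊗ Q[G2] = Q^(G1 x G2). *)
Definition etens (gT1 gT2 : finGroupType) (a : {ffun gT1 -> rat})
  (b : {ffun gT2 -> rat}) : {ffun gT1 * gT2 -> rat} :=
  [ffun g => a g.1 * b g.2].

(* Image of A ⊗_Z B in S1 ⊗ S2 ⊆ Q[G1] ⊗ Q[G2]: the additive subgroup
   generated by the elementary tensors a ⊗ b (A, B being subgroups, this is
   the set of finite sums of such). *)
Definition tens (gT1 gT2 : finGroupType) (A : {ffun gT1 -> rat} -> Prop)
  (B : {ffun gT2 -> rat} -> Prop) (x : {ffun gT1 * gT2 -> rat}) : Prop :=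
  exists s : seq ({ffun gT1 -> rat} * {ffun gT2 -> rat}),
    (forall ab, ab \in s -> A ab.1 /\ B ab.2) /\
    x = \sum_(ab <- s) etens ab.1 ab.2.

From HB Require Import structures.
From mathcomp Require Import all_boot all_order all_algebra all_fingroup all_field all_character.
Set Implicit Arguments. Unset Strict Implicit. Unset Printing Implicit Defensive.
Import Order.TTheory GRing.Theory Num.Theory.
Local Open Scope ring_scope.

(* For an abelian group G, the irreducible characters of G are ring morphisms
   Q[G] -> C, and they map the integral closure S of Z[G] to algebraic
   integers.  Fourier inversion then shows |G| s \in Z[G] for every s \in S,
   i.e. |G| Z[G] is contained in the conductor I.  When |G1| and |G2| are
   coprime, write 1 = u |G1| + v |G2|: an x in (R1 (x) I2) /\ (I1 (x) R2)
   splits as u |G1| x + v |G2| x, with both summands in I1 (x) I2. *)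

Section MonicRootOverAint.

Variables (n : nat) (c : nat -> algC) (x : algC).
Hypothesis monic_root : x ^+ n + \sum_(i < n) c i * x ^+ i = 0.

Lemma mul_exp_monic_root_in (S : {pred algC}) (T : zmodClosed algC) :
    {in S &, forall u v, u * v \in S} -> (forall i, (i < n)%N -> c i \in S) ->
    (forall s k, s \in S -> (k < n)%N -> s * x ^+ k \in T) ->
  forall m s, s \in S -> s * x ^+ m \in T.
Proof.
move=> mulS Sc lowT m; elim/ltn_ind: m => m IHm s Ss.
have [ltmn | lenm] := ltnP m n; first exact: lowT.
have -> : x ^+ m = x ^+ (m - n) * x ^+ n by rewrite -exprD subnK.
have -> : x ^+ n = - \sum_(i < n) c i * x ^+ i.
  by apply/eqP; rewrite -subr_eq0 opprK monic_root.
rewrite !mulrN rpredN !mulr_sumr rpred_sum // => i _.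
rewrite (mulrCA (x ^+ _) (c i)) -exprD mulrA IHm ?mulS ?Sc //.
by rewrite -ltn_subRL subnBA // addnC addnK.
Qed.

Hypothesis Aint_c : forall i, c i \in Aint.

Lemma Aint_monic_root : x \in Aint.
Proof.
have Aint_cs : {subset [seq c i | i <- iota 0 n] <= Aint}.
  by move=> _ /mapP[i _ ->].
have [S [[S1 _ mulS] cS] [[m Y] YS spanY]] := Aint_subring_exists Aint_cs.
rewrite /= in YS spanY.
(* The Z-span T of the y * x^k (y in the Z-basis Y of S, k < n) is a ring
   containing x that is finitely generated as a Z-module. *)
pose Yx := [seq y * x ^+ k | y <- (Y : seq algC), k <- iota 0 n].
pose T := Cint_span Yx.
have spanYx := Cint_spanP (in_tuple Yx).
have lowT s k : s \in S -> (k < n)%N -> s * x ^+ k \in T.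
  move=> /spanY[a ->] ltkn; rewrite mulr_suml rpred_sum // => i _.
  rewrite mulrzAl rpredMz // mem_Cint_span //; apply/allpairsP.
  exists ((Y : seq algC)`_i, k); split; rewrite ?mem_iota //.
  by apply: mem_nth; rewrite size_tuple.
have Sc i : (i < n)%N -> c i \in S.
  by move=> lt_in; apply: cS; apply/mapP; exists i; rewrite ?mem_iota.
have expT := mul_exp_monic_root_in mulS Sc lowT.
have Yx_gen z : z \in Yx -> exists2 y, y \in S & exists k, z = y * x ^+ k.
  by case/allpairsP => -[y k] /= [yY _ ->]; exists y; [apply: YS | exists k].
have mulT : mulr_closed T.
  split; first by rewrite -[1]mulr1 -(expr0 x) expT.
  move=> _ _ /spanYx[a ->] /spanYx[b ->].
  rewrite mulr_suml rpred_sum // => i _; rewrite mulr_sumr rpred_sum // => j _.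
  rewrite mulrzAl mulrzAr !rpredMz //.
  have [y Sy [k ->]] := Yx_gen _ (mem_nth 0 (ltn_ord i)).
  have [y' Sy' [k' ->]] := Yx_gen _ (mem_nth 0 (ltn_ord j)).
  by rewrite mulrACA -exprD expT ?mulS.
apply: (fin_Csubring_Aint mulT spanYx).
by rewrite -[x]mul1r -(expr1 x) expT.
Qed.

End MonicRootOverAint.

Section AbelianGroupAlgebra.

Variable gT : finGroupType.
Hypothesis abG : abelian [set: gT].
Let G := [set: gT]%G.

Definition chi_eval (i : Iirr G) (a : {ffun gT -> rat}) : algC :=
  \sum_(g : gT) ratr (a g) * 'chi[G]_i g.

Let lin_chi i : 'chi[G]_i \is a linear_char.
Proof. by move/char_abelianP: abG. Qed.

Lemma chi_evalD i a b : chi_eval i (a + b) = chi_eval i a + chi_eval i b.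
Proof.
by rewrite /chi_eval -big_split; apply: eq_bigr => g _; rewrite ffunE rmorphD mulrDl.
Qed.

Lemma chi_eval0 i : chi_eval i 0 = 0.
Proof. by rewrite /chi_eval big1 // => g _; rewrite ffunE rmorph0 mul0r. Qed.

Lemma chi_eval_sum i n (F : 'I_n -> {ffun gT -> rat}) :
  chi_eval i (\sum_(k < n) F k) = \sum_(k < n) chi_eval i (F k).
Proof. exact: (big_morph _ (chi_evalD i) (chi_eval0 i)). Qed.

Lemma chi_evalM i a b : chi_eval i (gmul a b) = chi_eval i a * chi_eval i b.
Proof.
rewrite /chi_eval mulr_suml.
under eq_bigr do rewrite ffunE rmorph_sum mulr_suml.
rewrite exchange_big /=; apply: eq_bigr => h _.
rewrite mulr_sumr (reindex_inj (mulgI h)) /=; apply: eq_bigr => g _.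
by rewrite mulKg rmorphM lin_charM ?in_setT // mulrACA.
Qed.

Lemma chi_eval1 i : chi_eval i (gunit gT) = 1.
Proof.
rewrite /chi_eval (bigD1 1%g) //= big1 ?addr0.
  by rewrite ffunE eqxx rmorph1 mul1r lin_char1.
by move=> g /negPf g1; rewrite ffunE g1 rmorph0 mul0r.
Qed.

Lemma chi_evalX i a k : chi_eval i (gpow a k) = chi_eval i a ^+ k.
Proof.
elim: k => [|k IHk]; first by rewrite expr0 chi_eval1.
by rewrite /gpow iterS -/(gpow a k) chi_evalM IHk exprS.
Qed.

Lemma Aint_chi_eval_ZG i a : inZG a -> chi_eval i a \in Aint.
Proof.
move=> Za; rewrite rpred_sum // => g _; rewrite rpredM ?Aint_irr //.
by apply: Aint_Cint; rewrite Cint_rat.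
Qed.

Lemma Aint_chi_eval_S i s : inS s -> chi_eval i s \in Aint.
Proof.
case=> n [r [Zr monic_s]].
apply: (@Aint_monic_root n (fun k => chi_eval i (r k))); last first.
  by move=> k; apply: Aint_chi_eval_ZG.
transitivity (chi_eval i (gpow s n + \sum_(k < n) gmul (r k) (gpow s k))).
  rewrite chi_evalD chi_eval_sum chi_evalX.
  by congr (_ + _); apply: eq_bigr => k _; rewrite chi_evalM chi_evalX.
by rewrite monic_s chi_eval0.
Qed.

Lemma chi_eval_inversion (s : {ffun gT -> rat}) g :
  \sum_i chi_eval i s * ('chi[G]_i g)^* = ratr (#|gT|%:R * s g).
Proof.
rewrite /chi_eval; under eq_bigr do rewrite mulr_suml.
rewrite exchange_big /=.
under eq_bigr do under eq_bigr do rewrite -mulrA.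
under eq_bigr do rewrite -mulr_sumr.
have centG h : #|'C_G[h]%g| = #|gT|.
  by rewrite (setIidPl _) ?cardsT // sub_cent1 (subsetP abG h (in_setT h)).
rewrite (bigD1 g) //= [X in _ + X]big1 ?addr0 => [|h neq_hg].
  rewrite second_orthogonality_relation ?in_setT // class_refl mulr1n centG.
  by rewrite rmorphM /= ratr_nat mulrC.
rewrite second_orthogonality_relation ?in_setT //.
have [/imsetP[y _ def_h]|] := boolP (h \in (g ^: G)%g); last by rewrite mulr0.
by move: neq_hg; rewrite def_h conjgE (centsP abG g _ y) ?in_setT // mulKg eqxx.
Qed.

Lemma card_mul_inS_int (s : {ffun gT -> rat}) g :
  inS s -> #|gT|%:R * s g \is a Num.int.
Proof.
move=> Ss; rewrite -Cint_rat; apply: Cint_rat_Aint; first exact: Crat_rat.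
rewrite -chi_eval_inversion rpred_sum // => i _.
by rewrite rpredM ?Aint_chi_eval_S // -lin_charV_conj ?in_setT ?Aint_irr.
Qed.

End AbelianGroupAlgebra.

Definition scalef (T : finType) (c : rat) (a : {ffun T -> rat}) : {ffun T -> rat} :=
  [ffun g => c * a g].

Lemma gmul_unit (gT : finGroupType) (a : {ffun gT -> rat}) : gmul a (gunit gT) = a.
Proof.
apply/ffunP => g; rewrite ffunE (bigD1 g) //= big1 ?addr0.
  by rewrite ffunE mulVg eqxx mulr1.
by move=> h neq_hg; rewrite ffunE -eq_mulVg1 (negPf neq_hg) mulr0.
Qed.

Lemma inZG_inS (gT : finGroupType) (a : {ffun gT -> rat}) : inZG a -> inS a.
Proof.
move=> Za; exists 1%N, (fun _ => - a); split; first by move=> _ g; rewrite ffunE rpredN.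
by rewrite big_ord1 /gpow /= !gmul_unit addrN.
Qed.

Lemma inI_inZG (gT : finGroupType) (a : {ffun gT -> rat}) : inI a -> inZG a.
Proof.
case=> _ aS_ZG; rewrite -[a]gmul_unit; apply/aS_ZG/inZG_inS => g.
by rewrite ffunE; case: (_ == _).
Qed.

Lemma inI_card_scale (gT : finGroupType) (m : rat) (r : {ffun gT -> rat}) :
  abelian [set: gT] -> m \is a Num.int -> inZG r -> inI (scalef (m * #|gT|%:R) r).
Proof.
move=> abG mZ Zr; split; first by apply: inZG_inS => g; rewrite ffunE !rpredM ?rpred_nat.
move=> t St g; rewrite ffunE rpred_sum // => h _; rewrite ffunE.
rewrite -mulrA mulrACA.
by rewrite rpredM ?card_mul_inS_int // rpredM.
Qed.

Section Tensor.

Variables gT1 gT2 : finGroupType.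
Implicit Types (A : {ffun gT1 -> rat} -> Prop) (B : {ffun gT2 -> rat} -> Prop).

Lemma tensD A B x y : tens A B x -> tens A B y -> tens A B (x + y).
Proof.
move=> [s [sAB ->]] [s' [s'AB ->]]; exists (s ++ s'); split; last by rewrite big_cat.
by move=> ab; rewrite mem_cat => /orP[/sAB|/s'AB].
Qed.

Lemma tens_sub A A' B B' x :
  (forall a, A a -> A' a) -> (forall b, B b -> B' b) -> tens A B x -> tens A' B' x.
Proof. by move=> AA' BB' [s [sAB ->]]; exists s; split=> // ab /sAB[/AA' ? /BB']. Qed.

Lemma tens_scalel A A' B c x :
  (forall a, A a -> A' (scalef c a)) -> tens A B x -> tens A' B (scalef c x).
Proof.
move=> AA' [s [sAB ->]]; exists [seq (scalef c ab.1, ab.2) | ab <- s]; split.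
  by move=> _ /mapP[ab /sAB[Aa Bb] ->]; split=> //; apply: AA'.
apply/ffunP => g; rewrite big_map !ffunE !sum_ffunE mulr_sumr.
by apply: eq_bigr => ab _; rewrite !ffunE mulrA.
Qed.

Lemma tens_scaler A B B' c x :
  (forall b, B b -> B' (scalef c b)) -> tens A B x -> tens A B' (scalef c x).
Proof.
move=> BB' [s [sAB ->]]; exists [seq (ab.1, scalef c ab.2) | ab <- s]; split.
  by move=> _ /mapP[ab /sAB[Aa Bb] ->]; split=> //; apply: BB'.
apply/ffunP => g; rewrite big_map !ffunE !sum_ffunE mulr_sumr.
by apply: eq_bigr => ab _; rewrite !ffunE mulrCA.
Qed.

End Tensor.

Lemma coprime_bezout_rat (m n : nat) :
  coprime m n -> exists u v : int, u%:~R * m%:R + v%:~R * n%:R = 1 :> rat.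
Proof.
move=> co_mn; have /coprimezP[[u v] /= Euv] : coprimez m n by [].
by exists u, v; have := congr1 (fun z : int => z%:~R : rat) Euv; rewrite rmorphD !rmorphM.
Qed.

Theorem mainTheorem11 (p q e f : nat) (gT1 gT2 : finGroupType) :
  prime p -> prime q -> p != q ->
  abelian [set: gT1] -> #|gT1| = (p ^ e)%N ->
  abelian [set: gT2] -> #|gT2| = (q ^ f)%N ->
  forall x : {ffun gT1 * gT2 -> rat},
    tens (@inI gT1) (@inI gT2) x <->
    (tens (@inZG gT1) (@inI gT2) x /\ tens (@inI gT1) (@inZG gT2) x).
Proof.
move=> p_pr q_pr neq_pq abG1 cardG1 abG2 cardG2 x; split.
  by move=> xII; split; apply: tens_sub xII => // a; apply: inI_inZG.
case=> xRI xIR.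
have co_G12 : coprime #|gT1| #|gT2|.
  by rewrite cardG1 cardG2 coprimeXl ?coprimeXr // prime_coprime // dvdn_prime2.
have [u [v Euv]] := coprime_bezout_rat co_G12.
have -> : x = scalef (u%:~R * #|gT1|%:R) x + scalef (v%:~R * #|gT2|%:R) x.
  by apply/ffunP => g; rewrite !ffunE -mulrDl Euv mul1r.
apply: tensD.
  by apply: tens_scalel xRI => a Za; apply: inI_card_scale.
by apply: tens_scaler xIR => b Zb; apply: inI_card_scale.
Qed.
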